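(* For every integer $t$, there exists a connected bipartite graph whose adjacency matrix has exactly five distinct eigenvalues and which has at least $t$ distinct valencies (vertex degrees).
   Context: Eigenvalues of a graph are the eigenvalues of its adjacency matrix. Graphs are finite, simple and undirected. *)

From mathcomp Require Import all_boot all_order all_algebra.
From mathcomp Require Import algC.
Set Implicit Arguments. Unset Strict Implicit. Unset Printing Implicit Defensive.
Import GRing.Theory Num.Theory.
Local Open Scope ring_scope.

Definition simple_graph (n : nat) (e : rel 'I_n) : Prop :=
  symmetric e /\ irreflexive e.

Definition adjmx (n : nat) (e : rel 'I_n) : 'M[algC]_n :=
  \matrix_(i, j) (e i j)%:R.

Definition distinct_eigenvalues (n : nat) (e : rel 'I_n) (s : seq algC) : Prop :=
  uniq s /\ forall a : algC, eigenvalue (adjmx e) a <-> a \in s.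

Definition connected_graph (n : nat) (e : rel 'I_n) : Prop :=
  (0 < n)%N /\ forall x y : 'I_n, connect e x y.

Definition bipartite (n : nat) (e : rel 'I_n) : Prop :=
  exists c : 'I_n -> bool, forall x y, e x y -> c x != c y.

Definition degree (n : nat) (e : rel 'I_n) (x : 'I_n) : nat := #|[set y | e x y]|.

Definition num_valencies (n : nat) (e : rel 'I_n) : nat :=
  size (undup [seq degree e x | x <- enum 'I_n]).

(* Let P be one colour class of a bipartite graph such that every vertex of P
   has degree R and any two distinct vertices of P have exactly M common
   neighbours, 0 < M < R.  On row vectors supported on P, the square of the
   adjacency matrix acts as (R - M) I + M J, so a nonzero eigenvalue a satisfies
   a^2 = R - M or a^2 = R - M + M |P|, and both values occur.  Two vertices with
   the same neighbourhood add the eigenvalue 0, so the spectrum is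
   {0, +-sqrt(R - M), +-sqrt(R - M + M |P|)}, whatever the degrees of the
   vertices outside P.  It remains to build such a graph whose other side has
   t distinct degrees: the incidence graph of a suitable design on t points. *)

From mathcomp Require Import all_boot all_order all_algebra algC ring zify.
Import GRing.Theory Num.Theory Order.TTheory.

Set Implicit Arguments. Unset Strict Implicit. Unset Printing Implicit Defensive.
Local Open Scope ring_scope.

Lemma adjmxE n (e : rel 'I_n) i j : adjmx e i j = (e i j)%:R.
Proof. exact: mxE. Qed.

Lemma adjmx_sqrE n (e : rel 'I_n) i j :
  (adjmx e *m adjmx e) i j = #|[set z | e i z && e z j]|%:R.
Proof.
rewrite mxE -sum1dep_card natr_sum [in RHS]big_mkcond /=; apply: eq_bigr => z _.
by rewrite !adjmxE; case: (e i z); case: (e z j); rewrite ?mul1r ?mul0r.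
Qed.

Lemma twins_eigenvalue0 n (e : rel 'I_n) (u w : 'I_n) :
  u != w -> e u =1 e w -> eigenvalue (adjmx e) 0.
Proof.
move=> uw euw; apply/eigenvalueP; exists (delta_mx 0 u - delta_mx 0 w).
  rewrite scale0r mulmxBl -!rowE; apply/rowP => z; rewrite !mxE euw; exact: subrr.
apply/negP => /eqP/rowP/(_ u); rewrite !mxE !eqxx (negbTE uw) /= subr0.
by move/eqP; rewrite oner_eq0.
Qed.

Lemma eq_pm_sqrtC (a l : algC) : a ^+ 2 = l -> (a == sqrtC l) || (a == - sqrtC l).
Proof. by move=> <-; rewrite -eqf_sqr sqrtCK. Qed.

Lemma uniq_pm_sqrtC (l1 l2 : algC) : 0 < l1 -> l1 < l2 ->
  uniq [:: 0; sqrtC l1; - sqrtC l1; sqrtC l2; - sqrtC l2].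
Proof.
move=> l1_gt0 l12.
have r1p : 0 < sqrtC l1 by rewrite sqrtC_gt0.
have r12 : sqrtC l1 < sqrtC l2.
  by rewrite ltr_sqrtC // qualifE /= ?(ltW l1_gt0) ?(ltW (lt_trans l1_gt0 l12)).
have r2p : 0 < sqrtC l2 := lt_trans r1p r12.
have n1 : - sqrtC l1 < 0 by rewrite oppr_lt0.
have n2 : - sqrtC l2 < 0 by rewrite oppr_lt0.
have n21 : - sqrtC l2 < - sqrtC l1 by rewrite ltrN2.
rewrite /= !inE !negb_or (lt_eqF r1p) (gt_eqF n1) (lt_eqF r2p) (gt_eqF n2).
rewrite (gt_eqF (lt_trans n1 r1p)) (lt_eqF r12) (gt_eqF (lt_trans n2 r1p)).
by rewrite (lt_eqF (lt_trans n1 r2p)) (gt_eqF n21) (gt_eqF (lt_trans n2 r2p)).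
Qed.

Section PointRegularBipartite.
Variables (n : nat) (e : rel 'I_n) (pt : 'I_n -> bool) (R M p : nat).
Hypothesis e_sym : symmetric e.
Hypothesis pt_bipartite : forall x y, e x y -> pt x != pt y.
Hypothesis pt_degree : forall x, pt x -> #|[set y | e x y]| = R.
Hypothesis pt_codegree :
  forall x y, pt x -> pt y -> x != y -> #|[set z | e x z && e z y]| = M.
Hypothesis card_pt : #|[set x | pt x]| = p.

Local Notation A := (adjmx e).
Local Notation l1 := (R%:R - M%:R : algC).
Local Notation l2 := (R%:R - M%:R + M%:R * p%:R : algC).

Lemma pt_nonadj x y : pt x = pt y -> e x y = false.
Proof. by move=> xy; apply/negP => /pt_bipartite; rewrite xy eqxx. Qed.

Lemma codegree_across x y : pt x != pt y -> #|[set z | e x z && e z y]| = 0%N.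
Proof.
move=> xy; apply: eq_card0 => z; rewrite !inE.
apply/negP => /andP[/pt_bipartite xz /pt_bipartite zy].
by move: xy xz zy; case: (pt x); case: (pt y); case: (pt z).
Qed.

Lemma adjmx_sqr_pt j i : pt i ->
  (A *m A) j i = (pt j)%:R * M%:R + (j == i)%:R * l1.
Proof.
move=> pti; rewrite adjmx_sqrE.
have [->|ji] := eqVneq j i.
  rewrite pti !mul1r addrC subrK -(pt_degree pti); congr _%:R.
  by apply: eq_card => z; rewrite !inE e_sym andbb.
rewrite mul0r addr0; case ptj: (pt j); first by rewrite pt_codegree // mul1r.
by rewrite codegree_across ?ptj ?pti // mul0r.
Qed.

Lemma adjmx_sqr_across j i : pt j -> ~~ pt i -> (A *m A) j i = 0.
Proof. by move=> ptj pti; rewrite adjmx_sqrE codegree_across // ptj (negbTE pti). Qed.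

Definition pt_sum (v : 'rV[algC]_n) := \sum_j (pt j)%:R * v 0 j.

Definition pt_indicator : 'rV[algC]_n := \row_j (pt j)%:R.

Definition pt_supported (u : 'rV[algC]_n) := forall j, ~~ pt j -> u 0 j = 0.

Lemma sum_pt : \sum_j (pt j)%:R = p%:R :> algC.
Proof.
rewrite -card_pt -sum1dep_card natr_sum [in RHS]big_mkcond /=.
by apply: eq_bigr => j _; case: (pt j).
Qed.

Lemma pt_sum_indicator : pt_sum pt_indicator = p%:R.
Proof. by rewrite -sum_pt; apply: eq_bigr => j _; rewrite mxE -natrM mulnb andbb. Qed.

Lemma mulmx_adjmx_sqr_pt v i : pt i ->
  (v *m (A *m A)) 0 i = l1 * v 0 i + M%:R * pt_sum v.
Proof.
move=> pti; rewrite mxE.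
under eq_bigr => j _ do rewrite adjmx_sqr_pt // mulrDr.
rewrite big_split /= addrC; congr (_ + _).
  rewrite (bigD1 i) //= eqxx big1 ?addr0; first by rewrite mul1r mulrC.
  by move=> j /negbTE ->; rewrite mul0r mulr0.
by rewrite /pt_sum mulr_sumr; apply: eq_bigr => j _; ring.
Qed.

Lemma mulmx_adjmx_pt u i : pt_supported u -> pt i -> (u *m A) 0 i = 0.
Proof.
move=> hu pti; rewrite mxE big1 // => j _.
case ptj: (pt j); first by rewrite adjmxE pt_nonadj ?ptj ?pti // mulr0.
by rewrite hu ?ptj // mul0r.
Qed.

Lemma pt_supported_mulmx_adjmx_sqr u : pt_supported u ->
  u *m (A *m A) = l1 *: u + (M%:R * pt_sum u) *: pt_indicator.
Proof.
move=> hu; apply/rowP => i.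
have -> : (l1 *: u + (M%:R * pt_sum u) *: pt_indicator) 0 i
    = l1 * u 0 i + M%:R * pt_sum u * (pt i)%:R by rewrite !mxE.
case pti: (pt i); first by rewrite mulmx_adjmx_sqr_pt // mulr1.
rewrite mxE big1 => [|j _]; last first.
  case ptj: (pt j); first by rewrite adjmx_sqr_across ?pti // mulr0.
  by rewrite hu ?ptj // mul0r.
by rewrite hu ?pti // !mulr0 addr0.
Qed.

(* An eigenvector [u] of [A^2] on the points for [a^2] lifts to the
   eigenvector [u + a^-1 u A] of [A] for [a]. *)
Lemma eigenvalue_lift u (a : algC) : pt_supported u -> u != 0 ->
  u *m (A *m A) = a ^+ 2 *: u -> a != 0 -> eigenvalue A a.
Proof.
move=> hu un0 hA a0; apply/eigenvalueP; exists (u + a^-1 *: (u *m A)).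
  rewrite mulmxDl -scalemxAl -mulmxA hA scalerA scalerDr scalerA.
  rewrite divff // scale1r addrC; congr (_ + _); congr (_ *: _).
  by rewrite expr2 mulrA mulVf // mul1r.
apply: contra un0 => /eqP/rowP u0; apply/eqP/rowP => j; rewrite mxE.
case ptj: (pt j); last by rewrite hu ?ptj.
move: (u0 j); rewrite mxE [in X in _ + X]mxE (mulmx_adjmx_pt hu ptj) !mxE.
by rewrite mulr0 addr0.
Qed.

Lemma eigenvector_pt_vanish (v : 'rV[algC]_n) (a : algC) :
  v *m A = a *: v -> a != 0 -> (forall i, pt i -> v 0 i = 0) -> v = 0.
Proof.
move=> hv a0 v0; apply/rowP => j; rewrite mxE.
case ptj: (pt j); first exact: v0.
have : (v *m A) 0 j = 0.
  rewrite mxE big1 // => k _.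
  case ptk: (pt k); first by rewrite v0 // mul0r.
  by rewrite adjmxE pt_nonadj ?ptk ?ptj // mulr0.
by rewrite hv mxE => /eqP; rewrite mulf_eq0 (negbTE a0) => /eqP.
Qed.

Lemma eigenvalue_sqr_cases (a : algC) : eigenvalue A a -> a != 0 ->
  a ^+ 2 = l1 \/ a ^+ 2 = l2.
Proof.
move=> /eigenvalueP[v hv vn0] a0.
have hv2 : v *m (A *m A) = a ^+ 2 *: v.
  by rewrite mulmxA hv -scalemxAl hv scalerA expr2.
have hpt i : pt i -> a ^+ 2 * v 0 i = l1 * v 0 i + M%:R * pt_sum v.
  by move=> pti; rewrite -mulmx_adjmx_sqr_pt // hv2 mxE.
have [S0|Sn0] := eqVneq (pt_sum v) 0.
  left; have [i /andP[pti vi]|v0] := pickP [pred i | pt i && (v 0 i != 0)].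
    by apply: (mulIf vi); rewrite hpt // S0 mulr0 addr0.
  case/eqP: vn0; apply: (eigenvector_pt_vanish hv a0) => i pti.
  by move: (v0 i); rewrite /= pti => /negbFE/eqP.
right; apply: (mulIf Sn0); rewrite /pt_sum mulr_sumr.
transitivity (\sum_j (pt j)%:R * (l1 * v 0 j + M%:R * pt_sum v)).
  apply: eq_bigr => j _; case ptj: (pt j); last by rewrite !mul0r mulr0.
  by rewrite !mul1r hpt.
under eq_bigr => j _ do rewrite mulrDr mulrCA.
by rewrite big_split /= -mulr_sumr -mulr_suml sum_pt /pt_sum; ring.
Qed.

Lemma eigenvalue_sqr_l1 x y (a : algC) : pt x -> pt y -> x != y ->
  a ^+ 2 = l1 -> a != 0 -> eigenvalue A a.
Proof.
move=> ptx pty xy a2 a0; pose u : 'rV[algC]_n := delta_mx 0 x - delta_mx 0 y.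
have u_supp : pt_supported u.
  move=> j ptj; rewrite !mxE.
  have -> : (j == x) = false by apply: contraNF ptj => /eqP->.
  have -> : (j == y) = false by apply: contraNF ptj => /eqP->.
  by rewrite andbF subrr.
apply: (eigenvalue_lift u_supp _ _ a0).
  apply/negP => /eqP/rowP/(_ x); rewrite !mxE eqxx (negbTE xy) /= subr0 => /eqP.
  by rewrite eqxx oner_eq0.
rewrite pt_supported_mulmx_adjmx_sqr // a2.
suff -> : pt_sum u = 0 by rewrite mulr0 scale0r addr0.
rewrite /pt_sum; under eq_bigr => j _ do rewrite !mxE /= mulrBr.
rewrite sumrB (bigD1 x) //= big1 => [|j /negbTE ->]; last by rewrite mulr0.
rewrite (bigD1 y) //= big1 => [|j /negbTE ->]; last by rewrite mulr0.
by rewrite ptx pty !eqxx !mulr1 subrr.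
Qed.

Lemma eigenvalue_sqr_l2 x (a : algC) : pt x -> a ^+ 2 = l2 -> a != 0 ->
  eigenvalue A a.
Proof.
move=> ptx a2 a0; have supp : pt_supported pt_indicator.
  by move=> j ptj; rewrite mxE (negbTE ptj).
apply: (eigenvalue_lift supp _ _ a0).
  by apply/negP => /eqP/rowP/(_ x); rewrite !mxE ptx => /eqP; rewrite oner_eq0.
by rewrite pt_supported_mulmx_adjmx_sqr // pt_sum_indicator -scalerDl a2.
Qed.

Lemma point_regular_spectrum x y u w : pt x -> pt y -> x != y ->
  u != w -> e u =1 e w -> (0 < M < R)%N ->
  distinct_eigenvalues e [:: 0; sqrtC l1; - sqrtC l1; sqrtC l2; - sqrtC l2].
Proof.
move=> ptx pty xy uw euw /andP[M_gt0 MR].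
have l1_gt0 : 0 < l1 by rewrite subr_gt0 ltr_nat.
have p_gt0 : (0 < p)%N.
  by rewrite -card_pt card_gt0; apply/set0Pn; exists x; rewrite inE.
have l12 : l1 < l2 by rewrite ltrDl mulr_gt0 // ltr0n.
have r1_gt0 : 0 < sqrtC l1 by rewrite sqrtC_gt0.
have r2_gt0 : 0 < sqrtC l2 by rewrite sqrtC_gt0 (lt_trans l1_gt0).
split; first exact: uniq_pm_sqrtC.
move=> a; split => [Aa|].
  have [->|a0] := eqVneq a 0; first by rewrite inE eqxx.
  have [] := eigenvalue_sqr_cases Aa a0 => /eq_pm_sqrtC/orP[]/eqP->;
    by rewrite !inE eqxx ?orbT.
rewrite !inE => /orP[/eqP->|/orP[/eqP->|/orP[/eqP->|/orP[/eqP->|/eqP->]]]].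
- exact: twins_eigenvalue0 uw euw.
- by apply: eigenvalue_sqr_l1 ptx pty xy _ _; rewrite ?sqrtCK ?gt_eqF.
- by apply: eigenvalue_sqr_l1 ptx pty xy _ _; rewrite ?sqrrN ?sqrtCK ?oppr_eq0 ?gt_eqF.
- by apply: eigenvalue_sqr_l2 ptx _ _; rewrite ?sqrtCK ?gt_eqF.
- by apply: eigenvalue_sqr_l2 ptx _ _; rewrite ?sqrrN ?sqrtCK ?oppr_eq0 ?gt_eqF.
Qed.

End PointRegularBipartite.

Local Close Scope ring_scope.

Lemma card_set_sum (A B : finType) (P : pred (A + B)) :
  #|[set v | P v]| = #|[set a | P (inl a)]| + #|[set b | P (inr b)]|.
Proof. by rewrite -!sum1dep_card big_sumType. Qed.

Lemma card_set_pair1 (I J : finType) (i : I) (Q : pred J) :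
  #|[set y : I * J | (y.1 == i) && Q y.2]| = #|[set c | Q c]|.
Proof.
have inj : injective (fun c : J => (i, c)) by move=> c1 c2 [].
rewrite -(card_imset _ inj); apply: eq_card => -[a c].
rewrite !inE; apply/idP/imsetP => [/andP [/eqP /= -> qc] | [c' ]].
  by exists c => //; rewrite inE.
by rewrite inE => qc [-> ->]; rewrite /= eqxx.
Qed.

Lemma card_set_ord_lt (N x : nat) : x <= N -> #|[set c : 'I_N | c < x]| = x.
Proof.
move=> xN; rewrite -sum1dep_card -(big_ord_widen _ (fun _ => 1%N) xN).
by rewrite sum1_card card_ord.
Qed.

Lemma card_set_pred0 (T : finType) (P : pred T) :
  (forall x, P x = false) -> #|[set x | P x]| = 0.
Proof. by move=> P0; apply: eq_card0 => x; rewrite inE P0. Qed.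

(* The incidence graph of a design on the points ['I_t].  There are three kinds
   of blocks: the chain blocks [{0, ..., k}] for [k < t], whose sizes [k + 1]
   provide the valencies; for [i < j], [t - chain_common i j] pair blocks
   [{i, j}], raising the number of blocks through [i] and [j] to exactly [t];
   and pendant blocks [{i}], raising the number of blocks through [i] to
   [point_degree t].  Ineligible indices are cut out by [vertex_valid].  The
   [+ 2] in [point_degree] leaves two pendant blocks at every point: they have
   the same neighbourhood, which puts 0 in the spectrum. *)
Section IncidenceGraph.
Variable t : nat.

Definition chain_common (i j : 'I_t) := #|[set k : 'I_t | (i <= k) && (j <= k)]|.

Definition pair_valid (x : 'I_t * 'I_t * 'I_t) :=
  (x.1.1 < x.1.2) && (x.2 < t - chain_common x.1.1 x.1.2).

Definition pair_has (x : 'I_t * 'I_t * 'I_t) (i : 'I_t) :=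
  (i == x.1.1) || (i == x.1.2).

Definition partial_degree (i : 'I_t) :=
  #|[set k : 'I_t | i <= k]| + #|[set x | pair_valid x && pair_has x i]|.

Definition point_degree := t + t * t * t + 2.

Definition pendant_valid (y : 'I_t * 'I_point_degree) :=
  y.2 < point_degree - partial_degree y.1.

Local Notation block := ('I_t + ('I_t * 'I_t * 'I_t + 'I_t * 'I_point_degree))%type.
Local Notation vertex := ('I_t + block)%type.

Definition block_valid (b : block) :=
  match b with
  | inl _ => true
  | inr (inl x) => pair_valid x
  | inr (inr y) => pendant_valid y
  end.

Definition vertex_valid (v : vertex) :=
  if v is inr b then block_valid b else true.

Definition incident (i : 'I_t) (b : block) :=
  match b with
  | inl k => i <= k
  | inr (inl x) => pair_has x i
  | inr (inr y) => y.1 == i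
  end.

Definition incidence : rel vertex := fun u v =>
  match u, v with
  | inl i, inr b | inr b, inl i => incident i b
  | _, _ => false
  end.

Definition is_point (v : vertex) := if v is inl _ then true else false.

Lemma incidence_sym : symmetric incidence.
Proof. by move=> [u|u] [v|v]. Qed.

Lemma incidence_irr : irreflexive incidence.
Proof. by move=> [u|u]. Qed.

Lemma incidence_bipartite u v : incidence u v -> is_point u != is_point v.
Proof. by case: u; case: v. Qed.

Lemma partial_degree_le i : partial_degree i <= t + t * t * t.
Proof.
apply: leq_add; first by apply: leq_trans (max_card _) _; rewrite card_ord.
by apply: leq_trans (max_card _) _; rewrite !card_prod !card_ord.
Qed.

Lemma pendant_valid_lt2 i (c : 'I_point_degree) : c < 2 -> pendant_valid (i, c).
Proof.
rewrite /pendant_valid /= => c_lt2; have := partial_degree_le i; rewrite /point_degree.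
by move: (partial_degree i) (t + _ * _ * _) (nat_of_ord c) c_lt2 => a b d; lia.
Qed.

Lemma chain_common_le i j : chain_common i j <= t.
Proof. by apply: leq_trans (max_card _) _; rewrite card_ord. Qed.

Lemma chain_commonC i j : chain_common i j = chain_common j i.
Proof. by apply: eq_card => k; rewrite !inE andbC. Qed.

Lemma point_degreeE i :
  #|[set v | vertex_valid v && incidence (inl i) v]| = point_degree.
Proof.
rewrite card_set_sum card_set_pred0 // add0n card_set_sum card_set_sum /= addnA.
have -> : #|[set y : 'I_t * 'I_point_degree | pendant_valid y && (y.1 == i)]|
    = point_degree - partial_degree i.
  transitivity #|[set y : 'I_t * 'I_point_degree |
                  (y.1 == i) && (y.2 < point_degree - partial_degree i)]|.
    by apply: eq_card => -[a c]; rewrite !inE /pendant_valid /= andbC; case: eqP => // ->.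
  rewrite (card_set_pair1 i (fun c : 'I_point_degree => c < point_degree - _)).
  by rewrite card_set_ord_lt // leq_subr.
by rewrite subnKC // (leq_trans (partial_degree_le i)) // leq_addr.
Qed.

Lemma card_pair_blocks (i j : 'I_t) : i < j ->
  #|[set x | pair_valid x && (pair_has x i && pair_has x j)]| = t - chain_common i j.
Proof.
move=> ij.
transitivity #|[set x : 'I_t * 'I_t * 'I_t |
                (x.1 == (i, j)) && (x.2 < t - chain_common i j)]|.
  apply: eq_card => -[[a b] c]; rewrite !inE /pair_valid /pair_has /=.
  have [->|ai] := eqVneq a i; have [->|bj] := eqVneq b j.
  - by rewrite ij orbT /= andbT xpair_eqE !eqxx.
  - rewrite xpair_eqE eqxx (negbTE bj) /=.
    by apply/negP => /andP[_ /orP[/eqP hj|//]]; subst; lia.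
  - rewrite xpair_eqE (negbTE ai) /=.
    by apply/negP => /and3P[_ /eqP hi _]; subst; lia.
  - rewrite xpair_eqE (negbTE ai) /=.
    by apply/negP => /and3P[/andP[ab _] /eqP hi /orP[/eqP hj|//]]; subst; lia.
rewrite (card_set_pair1 (i, j) (fun c : 'I_t => c < t - _)).
by rewrite card_set_ord_lt // leq_subr.
Qed.

Lemma point_codegree (i j : 'I_t) : i != j ->
  #|[set v | vertex_valid v && (incidence (inl i) v && incidence v (inl j))]| = t.
Proof.
move=> ij.
rewrite card_set_sum card_set_pred0 // add0n card_set_sum card_set_sum.
rewrite (card_set_pred0 (P := fun b : 'I_t * 'I_point_degree => _)); last first.
  move=> [a c] /=; apply/negP => /andP[_ /andP[/eqP h1 /eqP h2]].
  by move: ij; rewrite -h1 -h2 eqxx.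
rewrite addn0 /=.
have -> : #|[set k : 'I_t | (i <= k) && (j <= k)]| = chain_common i j by [].
have [lt|gt|eq] := ltngtP i j.
- by rewrite card_pair_blocks // subnKC // chain_common_le.
- rewrite chain_commonC.
  have -> : #|[set x | pair_valid x && (pair_has x i && pair_has x j)]|
      = #|[set x | pair_valid x && (pair_has x j && pair_has x i)]|.
    by apply: eq_card => x; rewrite !inE [pair_has x i && _]andbC.
  by rewrite card_pair_blocks // subnKC // chain_common_le.
- by move: ij; rewrite (val_inj eq) eqxx.
Qed.

Lemma chain_block_degree (k : 'I_t) :
  #|[set v | vertex_valid v && incidence (inr (inl k)) v]| = k.+1.
Proof.
rewrite card_set_sum (card_set_pred0 (P := fun b : block => _)) ?addn0; last first.
  by move=> b; rewrite andbF.
transitivity #|[set c : 'I_t | c < k.+1]|; first by apply: eq_card => c; rewrite !inE.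
by rewrite card_set_ord_lt.
Qed.

Lemma card_points : #|[set v | vertex_valid v && is_point v]| = t.
Proof.
rewrite card_set_sum (card_set_pred0 (P := fun b : block => _)) ?addn0; last first.
  by move=> b; rewrite andbF.
by rewrite -[RHS]card_ord -cardsT; apply: eq_card => c; rewrite !inE.
Qed.

End IncidenceGraph.

Lemma card_enum_val (T : finType) (A : {set T}) (P : pred T) :
  #|[set y : 'I_#|A| | P (enum_val y)]| = #|[set v | (v \in A) && P v]|.
Proof.
rewrite -(card_imset _ (@enum_val_inj _ _)); apply: eq_card => v; rewrite !inE.
apply/imsetP/andP => [[y] | [vA pv]].
  by rewrite inE => py ->; rewrite enum_valP.
by exists (enum_rank_in vA v); rewrite ?inE enum_rankK_in.
Qed.

Local Notation vertex t :=
  ('I_t + ('I_t + ('I_t * 'I_t * 'I_t + 'I_t * 'I_(point_degree t))))%type.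

Section Relabelling.
Variable m : nat.
Local Notation t := m.+2.

Definition vertices := [set v : vertex t | vertex_valid v].

Definition graph : rel 'I_#|vertices| :=
  fun x y => incidence (enum_val x) (enum_val y).

Lemma point0_vertex : (inl ord0 : vertex t) \in vertices.
Proof. by rewrite inE. Qed.

Definition vertex_rank := enum_rank_in point0_vertex.

Lemma vertex_rankK v : vertex_valid v -> enum_val (vertex_rank v) = v.
Proof. by move=> v_valid; rewrite /vertex_rank enum_rankK_in // inE. Qed.

Lemma vertex_valid_enum_val x : vertex_valid (enum_val (A := vertices) x).
Proof. by move: (enum_valP x); rewrite inE. Qed.

Lemma vertex_rank_neq u v : vertex_valid u -> vertex_valid v -> u != v ->
  vertex_rank u != vertex_rank v.
Proof.
move=> u_valid v_valid; apply: contra => /eqP /(congr1 (@enum_val _ (mem vertices))).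
by rewrite !vertex_rankK // => ->.
Qed.

Lemma card_graph_pred (P : pred (vertex t)) :
  #|[set y | P (enum_val (A := vertices) y)]| = #|[set v | vertex_valid v && P v]|.
Proof. by rewrite card_enum_val; apply: eq_card => v; rewrite !inE. Qed.

Lemma graph_degree x :
  #|[set y | graph x y]| = #|[set v | vertex_valid v && incidence (enum_val x) v]|.
Proof. exact: (card_graph_pred (incidence (enum_val x))). Qed.

Lemma graph_sym : symmetric graph.
Proof. by move=> x y; rewrite /graph incidence_sym. Qed.

Lemma graph_simple : simple_graph graph.
Proof. by split; [exact: graph_sym | move=> x; rewrite /graph incidence_irr]. Qed.

(* Every vertex is a point or meets one, and every point lies on the chain
   block [{0, ..., t - 1}], which contains the point [0]. *)
Lemma connect_point0 x : connect graph x (vertex_rank (inl ord0)).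
Proof.
have point_conn (i : 'I_t) : connect graph (vertex_rank (inl i)) (vertex_rank (inl ord0)).
  apply: (@connect_trans _ _ (vertex_rank (inr (inl ord_max)))).
    by apply: connect1; rewrite /graph !vertex_rankK //= -ltnS.
  by apply: connect1; rewrite /graph !vertex_rankK.
have [i [xi|xi]] : exists i, enum_val x = inl i \/ incidence (enum_val x) (inl i).
  move: (vertex_valid_enum_val x); case: (enum_val x) => [i|[k|[y|y]]] /= y_valid.
  - by exists i; left.
  - by exists ord0; right.
  - by exists y.1.1; right; rewrite /= /pair_has eqxx.
  - by exists y.1; right.
  by move: (point_conn i); rewrite -xi /vertex_rank enum_valK_in.
apply: (@connect_trans _ _ (vertex_rank (inl i))) => //.
by apply: connect1; rewrite /graph vertex_rankK.
Qed.

Lemma graph_connected : connected_graph graph.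
Proof.
split; first by apply/card_gt0P; exists (inl ord0); exact: point0_vertex.
move=> x y; apply: connect_trans (connect_point0 x) _.
by rewrite (sym_connect_sym graph_sym) connect_point0.
Qed.

Definition graph_point x := is_point (enum_val (A := vertices) x).

Lemma graph_point_bipartite x y : graph x y -> graph_point x != graph_point y.
Proof. exact: incidence_bipartite. Qed.

Lemma graph_point_degree x : graph_point x -> #|[set y | graph x y]| = point_degree t.
Proof.
rewrite /graph_point graph_degree; move: (vertex_valid_enum_val x).
by case: (enum_val x) => //= i _ _; rewrite point_degreeE.
Qed.

Lemma graph_point_codegree x y : graph_point x -> graph_point y -> x != y ->
  #|[set z | graph x z && graph z y]| = t.
Proof.
rewrite /graph_point (card_graph_pred (fun v => incidence _ v && incidence v _)).
case Ex: (enum_val x) => [i|//]; case Ey: (enum_val y) => [j|//] _ _ xy.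
apply: point_codegree; apply: contra xy => /eqP ij.
by apply/eqP/enum_val_inj; rewrite Ex Ey ij.
Qed.

Lemma graph_bipartite : bipartite graph.
Proof. by exists graph_point; exact: graph_point_bipartite. Qed.

Lemma card_graph_points : #|[set x | graph_point x]| = t.
Proof. by rewrite (card_graph_pred (@is_point t)) card_points. Qed.

Lemma graph_spectrum : exists s : seq algC, size s = 5 /\ distinct_eigenvalues graph s.
Proof.
have d_gt1 : 1 < point_degree t by rewrite /point_degree addn2.
have twin_valid (c : 'I_(point_degree t)) : c < 2 ->
    vertex_valid (inr (inr (inr (ord0, c))) : vertex t).
  exact: pendant_valid_lt2.
eexists; split; last first.
  apply: (point_regular_spectrum graph_sym graph_point_bipartite graph_point_degree
    graph_point_codegree card_graph_points
    (x := vertex_rank (inl ord0)) (y := vertex_rank (inl (Ordinal (isT : 1 < t))))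
    (u := vertex_rank (inr (inr (inr (ord0, Ordinal (ltnW d_gt1))))))
    (w := vertex_rank (inr (inr (inr (ord0, Ordinal d_gt1)))))).
  - by rewrite /graph_point vertex_rankK.
  - by rewrite /graph_point vertex_rankK.
  - exact: vertex_rank_neq.
  - by apply: vertex_rank_neq; rewrite ?twin_valid.
  - by move=> z; rewrite /graph !vertex_rankK ?twin_valid.
  - by rewrite /point_degree; lia.
by [].
Qed.

Lemma graph_valencies : t <= num_valencies graph.
Proof.
pose s := [seq (val k).+1 | k <- enum 'I_t].
apply: (@leq_trans (size s)); first by rewrite size_map size_enum_ord.
apply: uniq_leq_size.
  by rewrite map_inj_uniq ?enum_uniq // => a b [] /val_inj.
move=> d /mapP[k _ ->]; rewrite mem_undup; apply/mapP.
exists (vertex_rank (inr (inl k))); first by rewrite mem_enum.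
by rewrite /degree graph_degree vertex_rankK // chain_block_degree.
Qed.

End Relabelling.

Theorem theorem1 : forall t : nat,
  exists (n : nat) (e : rel 'I_n),
    [/\ simple_graph e, connected_graph e, bipartite e,
        (exists s : seq algC, size s = 5%N /\ distinct_eigenvalues e s)
      & (t <= num_valencies e)%N].
Proof.
move=> t; exists #|vertices t|, (@graph t); split.
- exact: graph_simple.
- exact: graph_connected.
- exact: graph_bipartite.
- exact: graph_spectrum.
- exact: leq_trans (leqW (leqnSn t)) (graph_valencies t).
Qed.
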